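(* For every graph $G$ with $\mu$ maximal cliques, $b_H(G)\le \mu-1$.
   Context: A grid is the set of integer points of the plane; a grid edge joins two grid points at distance $1$. A path in the grid is a sequence of distinct grid edges in which consecutive edges share exactly one grid point and non-consecutive edges share none; a bend is a pair of consecutive edges with different directions (horizontal/vertical). An EPG representation of a graph $G$ is a family $(P_v)_{v\in V(G)}$ of grid paths such that distinct $u,v$ are adjacent iff $P_u,P_v$ share a grid edge; it is $B_k$-EPG if every path has at most $k$ bends, and Helly if every subfamily of pairwise edge-intersecting paths has a grid edge common to all its members. The Helly-bend number $b_H(G)$ is the smallest $k$ such that $G$ admits a Helly $B_k$-EPG representation. *)

From mathcomp Require Import all_boot all_order all_algebra.
Set Implicit Arguments. Unset Strict Implicit. Unset Printing Implicit Defensive.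
Import GRing.Theory Num.Theory.
Local Open Scope ring_scope.

Definition gpoint := (int * int)%type.

(** A grid edge joins two grid points at distance 1.  We represent it
    canonically by its lower/left endpoint [p] and a direction flag:
    [(p, true)] is the horizontal edge from p to p + (1,0),
    [(p, false)] is the vertical edge from p to p + (0,1).
    This is a bijection with the set of grid edges. *)
Definition gedge := (gpoint * bool)%type.

Definition is_horizontal (e : gedge) : bool := e.2.

Definition endpoints (e : gedge) : seq gpoint :=
  let p := e.1 in
  if e.2 then [:: p; (p.1 + 1, p.2)] else [:: p; (p.1, p.2 + 1)].

Definition nshared (e f : gedge) : nat :=
  count (fun q => q \in endpoints f) (endpoints e).

Definition grid_path (s : seq gedge) : Prop :=
  [/\ s != [::], uniq s &
   forall i j : nat, (i < j < size s)%N ->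
     nshared (nth (0, 0, true) s i) (nth (0, 0, true) s j)
       = (if j == i.+1 then 1%N else 0%N)].

Definition bends (s : seq gedge) : nat :=
  count (fun i => is_horizontal (nth (0, 0, true) s i)
                  != is_horizontal (nth (0, 0, true) s i.+1))
        (iota 0 (size s).-1).

(** A finite simple graph is given by a symmetric irreflexive relation
    [adj] on a finite type [V]. *)

Definition EPG_rep (V : finType) (adj : rel V) (P : V -> seq gedge) : Prop :=
  (forall v, grid_path (P v)) /\
  (forall u v, u != v -> (adj u v <-> exists e, e \in P u /\ e \in P v)).

Definition Bk_EPG (V : finType) (adj : rel V) (k : nat) (P : V -> seq gedge)
  : Prop := EPG_rep adj P /\ (forall v, (bends (P v) <= k)%N).

Definition helly_rep (V : finType) (P : V -> seq gedge) : Prop :=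
  forall S : {set V},
    (forall u v, u \in S -> v \in S -> exists e, e \in P u /\ e \in P v) ->
    exists e, forall v, v \in S -> e \in P v.

Definition has_helly_Bk_EPG (V : finType) (adj : rel V) (k : nat) : Prop :=
  exists P : V -> seq gedge, Bk_EPG adj k P /\ helly_rep P.

Definition is_clique (V : finType) (adj : rel V) (A : {set V}) : bool :=
  [forall x in A, forall y in A, (x != y) ==> adj x y].

Definition is_max_clique (V : finType) (adj : rel V) (A : {set V}) : bool :=
  is_clique adj A &&
  [forall B : {set V}, (is_clique adj B && (A \subset B)) ==> (B == A)].

Definition num_max_cliques (V : finType) (adj : rel V) : nat :=
  #|[set A : {set V} | is_max_clique adj A]|.

From mathcomp Require Import all_boot all_order all_algebra.
From mathcomp Require Import zify.
Set Implicit Arguments. Unset Strict Implicit. Unset Printing Implicit Defensive.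

(* Number the maximal cliques C_1, ..., C_mu and put B = |V| + 1.  Vertex v
   is drawn as a monotone staircase of mu segments: segment k lies on the
   line at coordinate c_v(k) = kB if v is in C_k and kB + 1 + rank(v)
   otherwise (horizontal for odd k, vertical for even k) and runs from
   c_v(k-1) to c_v(k+1), so consecutive segments meet at a corner and mu
   segments give mu - 1 bends.  Since kB <= c_v(k) < (k+1)B, two staircases
   can only share an edge on a common line of the same index k, and there
   distinct vertices meet only if both lie in C_k.  Conversely all members
   of C_k pass through the edge at (kB, kB); as every clique lies in some
   C_k, this yields both the adjacency condition and the Helly property. *)

Import GRing.Theory.
Local Open Scope ring_scope.

Lemma sorted_map_iota (T : Type) (R : rel T) f a n :
  (forall i, R (f i) (f i.+1)) -> sorted R (map f (iota a n)).
Proof.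
move=> Rf; case: n => //= n.
by elim: n a => //= n IHn a; rewrite Rf IHn.
Qed.

Lemma sorted_cat_link (T : Type) (R : rel T) x0 s t :
  sorted R s -> sorted R t -> R (last x0 s) (head x0 t) -> sorted R (s ++ t).
Proof.
case: s => [|x s] //=; case: t => [|y t]; rewrite ?cats0 //= => Rs Rt Rst.
by rewrite cat_path Rs /= Rst.
Qed.

Fixpoint changes (T : eqType) (s : seq T) : nat :=
  if s is x :: s' then
    if s' is y :: _ then ((x != y) + changes s')%N else 0%N
  else 0%N.

Lemma bendsE s : bends s = changes (map snd s).
Proof.
elim: s => [|e [|f s] IHs] //.
by rewrite /bends /= in IHs *; rewrite -IHs -add1n iotaDl count_map.
Qed.

Lemma changes_nseq (T : eqType) n (x : T) : changes (nseq n x) = 0%N.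
Proof. by elim: n => [|[|n] IHn] //=; rewrite eqxx. Qed.

Lemma changes_cons2 (T : eqType) (x y : T) s :
  changes [:: x, y & s] = ((x != y) + changes (y :: s))%N.
Proof. by []. Qed.

Lemma changes_cat (T : eqType) (s t : seq T) :
  (changes (s ++ t) <= changes s + changes t + 1)%N.
Proof.
elim: s => [|x [_|y s IHs]]; first by rewrite leq_addr.
  by case: t => // y t; rewrite changes_cons2 addnC leq_add2l; case: (x != y).
by rewrite !cat_cons changes_cons2 -cat_cons -!addnA leq_add2l addnA.
Qed.

Definition tip (e : gedge) : gpoint :=
  if e.2 then (e.1.1 + 1, e.1.2) else (e.1.1, e.1.2 + 1).

Definition edge_succ (e f : gedge) : bool := f.1 == tip e.

Definition height (p : gpoint) : int := p.1 + p.2.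

Definition edge_line (e : gedge) : int := if e.2 then e.1.2 else e.1.1.

Lemma endpointsE e : endpoints e = [:: e.1; tip e].
Proof. by case: e => [p []]. Qed.

Lemma height_tip e : height (tip e) = height e.1 + 1.
Proof. by case: e => [[x y] []]; rewrite /height /tip /=; lia. Qed.

Lemma neq_height p q : height p != height q -> (p == q) = false.
Proof. by apply: contraNF => /eqP ->. Qed.

Lemma nshared_far e f : height e.1 + 2 <= height f.1 -> nshared e f = 0%N.
Proof.
move=> far; rewrite /nshared !endpointsE /= !inE.
by rewrite !neq_height // ?height_tip; apply/eqP; lia.
Qed.

Lemma nshared_succ e f : edge_succ e f -> nshared e f = 1%N.
Proof.
move/eqP=> fe; have hf : height f.1 = height e.1 + 1 by rewrite fe height_tip.
rewrite /nshared !endpointsE /= !inE -fe eqxx.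
by rewrite !neq_height // ?height_tip ?hf; apply/eqP; lia.
Qed.

Lemma succ_chain_height x0 s i : sorted edge_succ s -> (i < size s)%N ->
  height (nth x0 s i).1 = height (nth x0 s 0).1 + i%:Z.
Proof.
move=> /(sortedP x0) succ_s; elim: i => [|i IHi] lt_i_s; first by rewrite addr0.
by rewrite (eqP (succ_s i lt_i_s)) height_tip IHi 1?ltnW //; lia.
Qed.

Lemma succ_chain_grid_path s : s != [::] -> sorted edge_succ s -> grid_path s.
Proof.
set x0 := (0, 0, true) : gedge => s_neq0 succ_s.
have hs := succ_chain_height x0 succ_s.
rewrite /grid_path -/x0; split=> //.
  apply/(uniqP x0) => i j; rewrite !inE => lt_i lt_j.
  by move/(congr1 (fun e : gedge => height e.1)); rewrite /= (hs i) // (hs j) //; lia.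
move=> i j /andP [lt_ij lt_j]; case: eqP => [j_succ|j_nsucc].
  by subst j; apply: nshared_succ; move/(sortedP x0): succ_s; apply.
by apply: nshared_far; rewrite (hs i) ?(ltn_trans lt_ij) // (hs j) //; lia.
Qed.

Section Staircase.

Variable c : nat -> nat.

Definition stair_edge (k i : nat) : gedge :=
  if odd k then ((Posz (c k.-1 + i), Posz (c k)), true)
  else ((Posz (c k), Posz (c k.-1 + i)), false).

Definition stair_segment (k : nat) : seq gedge :=
  map (stair_edge k) (iota 0 (c k.+1 - c k.-1)).

Fixpoint staircase (n : nat) : seq gedge :=
  if n is m.+1 then staircase m ++ stair_segment m.+1 else [::].

Lemma mem_staircase n e :
  e \in staircase n <-> exists2 k, (0 < k <= n)%N & e \in stair_segment k.
Proof.
elim: n => [|n IHn] /=; first by split=> // -[[|k]].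
rewrite mem_cat; split.
  case/orP => [/IHn [k /andP [k_gt0 le_kn] e_k] | e_n].
    by exists k; rewrite // k_gt0 leqW.
  by exists n.+1; rewrite ?leqnn.
move=> [k /andP [k_gt0 le_k] e_k].
have [eq_k|ne_k] := eqVneq k n.+1; first by rewrite -eq_k e_k orbT.
apply/orP; left; apply/IHn; exists k => //.
by rewrite k_gt0 -ltnS ltn_neqAle ne_k le_k.
Qed.

Lemma staircase_bends n : (bends (staircase n) <= n.-1)%N.
Proof.
have segment_dirs k :
    map snd (stair_segment k) = nseq (size (stair_segment k)) (odd k).
  rewrite -(size_map snd); apply/all_pred1P; rewrite /stair_segment -map_comp all_map.
  by apply/allP => i _ /=; rewrite /stair_edge; case: odd.
rewrite bendsE; elim: n => [|n IHn] //=; rewrite map_cat segment_dirs.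
case: n IHn => [_|n IHn]; first by rewrite changes_nseq.
by apply: leq_trans (changes_cat _ _) _; rewrite changes_nseq addn0 addn1.
Qed.

Lemma staircase_line n e : e \in staircase n -> exists k, edge_line e = Posz (c k).
Proof.
case/mem_staircase => k _ /mapP [i _ ->]; exists k.
by rewrite /edge_line /stair_edge; case: odd.
Qed.

Hypothesis c_incr : forall k, (c k < c k.+1)%N.

Lemma stair_segment_size k : (0 < k)%N -> (1 < size (stair_segment k))%N.
Proof.
case: k => // k _; rewrite size_map size_iota /=.
by have := c_incr k; have := c_incr k.+1; lia.
Qed.

Lemma diagonal_in_staircase n k : (0 < k <= n)%N ->
  ((Posz (c k), Posz (c k)), odd k) \in staircase n.
Proof.
move=> k_in; apply/mem_staircase; exists k => //; apply/mapP.
case: k k_in => // k _; have := c_incr k; have := c_incr k.+1 => lt1 lt0.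
exists (c k.+1 - c k)%N; first by rewrite mem_iota /=; lia.
by rewrite /stair_edge /=; case: odd; congr (_, _, _); lia.
Qed.

Lemma stair_segment_link x0 k : (0 < k)%N ->
  edge_succ (last x0 (stair_segment k)) (head x0 (stair_segment k.+1)).
Proof.
move=> k_gt0; have := stair_segment_size k_gt0; have := stair_segment_size (ltn0Sn k).
rewrite /stair_segment -nth_last !size_map !size_iota.
case: (c k.+2 - _)%N => // l _ lt1.
rewrite (nth_map 0%N) ?size_iota ?nth_iota; [|lia..].
have := c_incr k; have := c_incr k.+1 => ? ?.
rewrite /edge_succ /stair_edge /tip /=.
by case: (odd k) => /=; apply/eqP; congr (_, _); lia.
Qed.

Lemma staircase_sorted n : sorted edge_succ (staircase n).
Proof.
have segment_sorted k : sorted edge_succ (stair_segment k).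
  apply: sorted_map_iota => i; rewrite /edge_succ /stair_edge /tip.
  by case: odd => /=; apply/eqP; congr (_, _); lia.
elim: n => [|[|n] IHn] //=.
apply: (sorted_cat_link (x0 := (0, 0, true))) IHn (segment_sorted _) _.
have := stair_segment_link (0, 0, true) (ltn0Sn n); rewrite /= last_cat.
by case: (stair_segment n.+1) (stair_segment_size (ltn0Sn n)).
Qed.

End Staircase.

Section Cliques.

Variables (V : finType) (adj : rel V).

Lemma is_cliqueP (A : {set V}) :
  reflect {in A &, forall x y, x != y -> adj x y} (is_clique adj A).
Proof.
apply: (iffP forall_inP) => [cl_A x y xA yA | cl_A x xA].
  by move/forall_inP/(_ y yA)/implyP: (cl_A x xA).
by apply/forall_inP => y yA; apply/implyP; apply: cl_A.
Qed.

Lemma is_max_cliqueE (A : {set V}) : is_max_clique adj A = maxset (is_clique adj) A.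
Proof.
rewrite /is_max_clique; apply/andP/maxsetP => [[cl_A /forallP max_A] | [cl_A max_A]].
  split=> // B cl_B sAB; apply/eqP.
  by move/implyP: (max_A B); apply; rewrite cl_B.
split=> //; apply/forallP => B; apply/implyP => /andP [cl_B sAB].
by rewrite (max_A B).
Qed.

Definition max_cliques : seq {set V} := enum [set A | is_max_clique adj A].

Definition clique_at (k : nat) : {set V} := nth set0 (set0 :: max_cliques) k.

Lemma num_max_cliquesE : num_max_cliques adj = size max_cliques.
Proof. exact: cardE. Qed.

Lemma clique_at_clique k : is_clique adj (clique_at k).
Proof.
apply/is_cliqueP => x y; rewrite /clique_at.
case: k => [|k] /=; first by rewrite inE.
case: (ltnP k (size max_cliques)) => [lt_k | /(nth_default set0) ->]; last by rewrite inE.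
move: (mem_nth set0 lt_k); rewrite mem_enum inE.
by case/andP => /is_cliqueP cl_k _; apply: cl_k.
Qed.

Lemma clique_at_index v k : v \in clique_at k -> (0 < k <= size max_cliques)%N.
Proof.
rewrite /clique_at; case: k => [|k] /=; first by rewrite inE.
by case: (ltnP k (size max_cliques)) => // /(nth_default set0) ->; rewrite inE.
Qed.

Lemma sub_clique_at (S : {set V}) : is_clique adj S -> exists k, S \subset clique_at k.
Proof.
case/maxset_exists => C max_C sSC; exists (index C max_cliques).+1.
by rewrite /clique_at /= nth_index // mem_enum inE is_max_cliqueE.
Qed.

End Cliques.

Section Representation.

Variables (V : finType) (adj : rel V).

Definition offset (v : V) (k : nat) : nat :=
  if v \in clique_at adj k then 0 else (enum_rank v).+1.

Definition coord (v : V) (k : nat) : nat := (k * #|V|.+1 + offset v k)%N.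

Definition stair_rep (v : V) : seq gedge :=
  staircase (coord v) (size (max_cliques adj)).

Lemma offset_lt v k : (offset v k < #|V|.+1)%N.
Proof. by rewrite /offset; case: ifP => // _; rewrite ltnS. Qed.

Lemma coord_incr v k : (coord v k < coord v k.+1)%N.
Proof. by rewrite /coord mulSn; have := offset_lt v k; lia. Qed.

Lemma coord_inj u v k l : coord u k = coord v l -> k = l /\ offset u k = offset v l.
Proof.
have divB w m : (coord w m %/ #|V|.+1 = m)%N.
  by rewrite /coord divnMDl // divn_small ?addn0 ?offset_lt.
have modB w m : (coord w m %% #|V|.+1 = offset w m)%N.
  by rewrite /coord modnMDl modn_small ?offset_lt.
move=> eq_c; split; first by rewrite -(divB u k) -(divB v l) eq_c.
by rewrite -modB -modB eq_c.
Qed.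

Lemma offset_eq u v k : u != v -> offset u k = offset v k ->
  u \in clique_at adj k /\ v \in clique_at adj k.
Proof.
rewrite /offset; case: ifP; case: ifP => // _ _ neq_uv [/ord_inj/enum_rank_inj eq_uv].
by rewrite eq_uv eqxx in neq_uv.
Qed.

Lemma stair_rep_adj u v e : u != v -> e \in stair_rep u -> e \in stair_rep v -> adj u v.
Proof.
move=> neq_uv /staircase_line [k line_u] /staircase_line [l line_v].
have [eq_kl eq_off] : k = l /\ offset u k = offset v l.
  by apply: coord_inj; apply/eqP; rewrite -eqz_nat -line_u -line_v.
subst l; have [u_k v_k] := offset_eq neq_uv eq_off.
by move/is_cliqueP: (clique_at_clique adj k); apply.
Qed.

Lemma clique_common_edge (S : {set V}) : is_clique adj S ->
  exists e, forall v, v \in S -> e \in stair_rep v.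
Proof.
case/sub_clique_at => k sSk; exists ((Posz (k * #|V|.+1), Posz (k * #|V|.+1)), odd k).
move=> v /(subsetP sSk) v_k.
have coord_k : coord v k = (k * #|V|.+1)%N by rewrite /coord /offset v_k addn0.
rewrite -coord_k; apply: diagonal_in_staircase; first exact: coord_incr.
exact: clique_at_index v_k.
Qed.

Lemma stair_rep_grid_path v : grid_path (stair_rep v).
Proof.
have cl_v : is_clique adj [set v].
  by apply/is_cliqueP => x y /set1P -> /set1P ->; rewrite eqxx.
apply: succ_chain_grid_path; last exact/staircase_sorted/coord_incr.
have [e /(_ v (set11 v))] := clique_common_edge cl_v.
by case: (stair_rep v).
Qed.

Lemma stair_rep_pairwise_clique (S : {set V}) :
  (forall u v, u \in S -> v \in S ->
     exists e, e \in stair_rep u /\ e \in stair_rep v) ->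
  is_clique adj S.
Proof.
move=> meet_S; apply/is_cliqueP => u v uS vS neq_uv.
by have [e [e_u e_v]] := meet_S u v uS vS; apply: stair_rep_adj e_u e_v.
Qed.

Lemma stair_rep_helly : helly_rep stair_rep.
Proof. by move=> S /stair_rep_pairwise_clique /clique_common_edge. Qed.

Hypothesis adj_sym : symmetric adj.

Lemma stair_rep_EPG : EPG_rep adj stair_rep.
Proof.
split=> [|u v neq_uv]; first exact: stair_rep_grid_path.
split=> [adj_uv | [e [e_u e_v]]]; last exact: stair_rep_adj e_u e_v.
have cl_uv : is_clique adj [set u; v].
  by apply/is_cliqueP => x y /set2P [] -> /set2P [] ->; rewrite ?eqxx // adj_sym.
have [e common_e] := clique_common_edge cl_uv.
by exists e; split; apply: common_e; rewrite !inE eqxx ?orbT.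
Qed.

End Representation.

Theorem corollary2p1 (V : finType) (adj : rel V)
  (adj_sym : symmetric adj) (adj_irr : irreflexive adj) :
  exists k : nat, (k <= num_max_cliques adj - 1)%N /\ has_helly_Bk_EPG adj k.
Proof.
exists (size (max_cliques adj)).-1; split; first by rewrite num_max_cliquesE subn1.
exists (stair_rep adj); split; last exact: stair_rep_helly.
by split=> [|v]; [apply: stair_rep_EPG | apply: staircase_bends].
Qed.
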